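(* If $\mu^\ast$ is an upper quasi-density on $\mathbb{H}$, then $\mu^\ast(X)=0$ for every finite $X\subseteq\mathbb{H}$.
   Context: $\mathbb{N}=\{0,1,2,\dots\}$, $\mathbb{N}^+=\{1,2,\dots\}$; $\mathbb{H}$ is one of $\mathbb{Z},\mathbb{N},\mathbb{N}^+$. For $X\subseteq\mathbb{H}$, $k\in\mathbb{N}^+$, $h\in\mathbb{N}$, $k\cdot X+h:=\{kx+h:x\in X\}$. An upper quasi-density on $\mathbb{H}$ is a function $\mu^\ast:\mathcal{P}(\mathbb{H})\to\mathbb{R}$ with $\mu^\ast(\mathbb{H})=1$, $\mu^\ast(X)\le1$ for all $X$, $\mu^\ast(X\cup Y)\le\mu^\ast(X)+\mu^\ast(Y)$ for all $X,Y$, and $\mu^\ast(k\cdot X+h)=\frac1k\mu^\ast(X)$ for all $X\subseteq\mathbb{H}$, $h,k\in\mathbb{N}^+$. *)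

From Stdlib Require Import Reals ZArith List.
Open Scope R_scope.

(* The three choices of the ambient set H: Z, N = {0,1,...}, N+ = {1,2,...},
   all realised as subsets of Z. *)
Inductive HKind : Type := HZ | HN | HNpos.

Definition Hset (H : HKind) (z : Z) : Prop :=
  match H with
  | HZ => True
  | HN => (0 <= z)%Z
  | HNpos => (1 <= z)%Z
  end.

Definition subH (H : HKind) (X : Z -> Prop) : Prop := forall z, X z -> Hset H z.

Definition dilate_shift (k h : Z) (X : Z -> Prop) : Z -> Prop :=
  fun z => exists x, X x /\ z = (k * x + h)%Z.

Definition setU (X Y : Z -> Prop) : Z -> Prop := fun z => X z \/ Y z.

Definition finite_set (X : Z -> Prop) : Prop :=
  exists l : list Z, forall z, X z <-> In z l.

(* Upper quasi-density on H: mu is defined on (at least) all subsets of H;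
   only its values on subsets of H matter. *)
Definition upper_quasi_density (H : HKind) (mu : (Z -> Prop) -> R) : Prop :=
  mu (Hset H) = 1 /\
  (forall X, subH H X -> mu X <= 1) /\
  (forall X Y, subH H X -> subH H Y -> mu (setU X Y) <= mu X + mu Y) /\
  (forall X (h k : Z), subH H X -> (1 <= h)%Z -> (1 <= k)%Z ->
     mu (dilate_shift k h X) = / IZR k * mu X).

(* Nonnegativity follows from subadditivity applied to X ∪ X = X.  Shifting
   by h >= 1 shows that all singletons of H have the same density c; since
   2 . {x} + 1 = {2x+1} is again a singleton of H, c = c / 2, so c = 0.  The
   empty set equals 2 . ∅ + 1 and is handled alike, and a finite set is a
   finite union of singletons. *)

From Stdlib Require Import Reals ZArith List Lia Lra.
From Stdlib Require Import FunctionalExtensionality PropExtensionality.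
Open Scope R_scope.

Lemma set_ext (A B : Z -> Prop) : (forall z, A z <-> B z) -> A = B.
Proof.
  intro AB; apply functional_extensionality; intro z.
  apply propositional_extensionality, AB.
Qed.

Definition set0 : Z -> Prop := fun _ => False.

Definition set1 (x : Z) : Z -> Prop := fun z => z = x.

Lemma dilate_shift_set0 (k h : Z) : dilate_shift k h set0 = set0.
Proof. apply set_ext; intro z; unfold dilate_shift, set0; firstorder. Qed.

Lemma dilate_shift_set1 (k h x : Z) :
  dilate_shift k h (set1 x) = set1 (k * x + h)%Z.
Proof.
  apply set_ext; intro z; unfold dilate_shift, set1; split.
  - intros [y [-> ->]]; reflexivity.
  - intros ->; exists x; auto.
Qed.

Lemma subH_set0 (H : HKind) : subH H set0.
Proof. intros z []. Qed.

Lemma subH_set1 (H : HKind) (x : Z) : Hset H x -> subH H (set1 x).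
Proof. intros Hx z ->; exact Hx. Qed.

Lemma Hset_double_succ (H : HKind) (x : Z) : Hset H x -> Hset H (2 * x + 1)%Z.
Proof. destruct H; unfold Hset; lia. Qed.

Section UpperQuasiDensity.

Variables (H : HKind) (mu : (Z -> Prop) -> R).
Hypothesis mu_uqd : upper_quasi_density H mu.

Lemma mu_setU_le (X Y : Z -> Prop) :
  subH H X -> subH H Y -> mu (setU X Y) <= mu X + mu Y.
Proof. destruct mu_uqd as [_ [_ [subadd _]]]; apply subadd. Qed.

Lemma mu_dilate_shift (X : Z -> Prop) (k h : Z) :
  subH H X -> (1 <= h)%Z -> (1 <= k)%Z -> mu (dilate_shift k h X) = / IZR k * mu X.
Proof. destruct mu_uqd as [_ [_ [_ dil]]]; apply dil. Qed.

Lemma mu_ge0 (X : Z -> Prop) : subH H X -> 0 <= mu X.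
Proof.
  intro HX.
  assert (XX : setU X X = X) by (apply set_ext; unfold setU; tauto).
  pose proof (mu_setU_le X X HX HX) as le; rewrite XX in le; lra.
Qed.

Lemma mu_set0 : mu set0 = 0.
Proof.
  pose proof (mu_dilate_shift set0 2 1 (subH_set0 H) ltac:(lia) ltac:(lia)) as half.
  rewrite dilate_shift_set0 in half; simpl in half; lra.
Qed.

Lemma mu_set1_shift (x y : Z) :
  Hset H x -> (x <= y)%Z -> mu (set1 y) = mu (set1 x).
Proof.
  intros Hx xy; destruct (Z.eq_dec x y) as [<- | neq]; [reflexivity |].
  pose proof (mu_dilate_shift (set1 x) 1 (y - x) (subH_set1 H x Hx)
                ltac:(lia) ltac:(lia)) as shift.
  rewrite dilate_shift_set1, Rinv_1, Rmult_1_l in shift.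
  replace (1 * x + (y - x))%Z with y in shift by lia; exact shift.
Qed.

Lemma mu_set1 (x : Z) : Hset H x -> mu (set1 x) = 0.
Proof.
  intro Hx.
  assert (same : mu (set1 (2 * x + 1)%Z) = mu (set1 x)).
  { destruct (Z.le_ge_cases x (2 * x + 1)).
    - exact (mu_set1_shift x (2 * x + 1) Hx ltac:(lia)).
    - symmetry; exact (mu_set1_shift (2 * x + 1) x (Hset_double_succ H x Hx) ltac:(lia)). }
  pose proof (mu_dilate_shift (set1 x) 2 1 (subH_set1 H x Hx) ltac:(lia) ltac:(lia)) as half.
  rewrite dilate_shift_set1, same in half; simpl in half; lra.
Qed.

Lemma mu_list (l : list Z) :
  (forall z, In z l -> Hset H z) -> mu (fun z => In z l) = 0.
Proof.
  induction l as [| a l IHl]; intro Hl.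
  - exact mu_set0.
  - assert (Hl' : subH H (fun z => In z l)) by (intros z; auto with datatypes).
    assert (Ha : Hset H a) by auto with datatypes.
    assert (cons : (fun z => In z (a :: l)) = setU (set1 a) (fun z => In z l)).
    { apply set_ext; intro z; unfold setU, set1; simpl; intuition. }
    pose proof (mu_setU_le _ _ (subH_set1 H a Ha) Hl') as le.
    pose proof (mu_ge0 _ (fun z (l_z : In z (a :: l)) => Hl z l_z)).
    rewrite <- cons, mu_set1, IHl in le by auto with datatypes; lra.
Qed.

End UpperQuasiDensity.

Theorem mainTheorem5 (H : HKind) (mu : (Z -> Prop) -> R) :
  upper_quasi_density H mu ->
  forall X : Z -> Prop, subH H X -> finite_set X -> mu X = 0.
Proof.
  intros mu_uqd X HX [l Xl].
  replace X with (fun z => In z l) by (symmetry; apply set_ext, Xl).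
  apply (mu_list H mu mu_uqd); intros z lz; apply HX, Xl, lz.
Qed.
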